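(* Let $D$ be a finite set of $n$ training instances partitioned into $K$ disjoint nonempty clusters $D = C_1 \cup \dots \cup C_K$ with $|C_k| = n_k \ge 1$. Let $m_1,\dots,m_K > 0$ and $\lambda_1, \lambda_2 > 0$ with $m_k = \lambda_2 n_k$ for all $k$, and set $u_k = \lambda_1 m_k$. Define $v(S) = \sum_{k=1}^K u_k\, \mathbf{1}\{S \cap C_k \neq \emptyset\}$ for $S \subseteq D$. Then for every $k$ and every $i \in C_k$: (i) the Shapley value of $i$ in $(D,v)$ equals $\lambda_1\lambda_2$, independently of $k$; (ii) the Banzhaf value of $i$ in $(D,v)$ equals $\lambda_1\lambda_2\, n_k/2^{\,n_k-1}$, and the map $n_k \mapsto n_k/2^{\,n_k-1}$ is non-increasing on positive integers and strictly decreasing for $n_k \ge 2$.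
   Context: Interpretation: $m_k$ is the number of test points associated with cluster $C_k$ and $u_k$ the utility of the cluster (e.g. $\lambda_1 = 1/\sum_k m_k$ for accuracy). The Shapley value of $i$ is $\phi_i = \mathbb{E}_{\pi}[v(S_i(\pi)\cup\{i\}) - v(S_i(\pi))]$ with $\pi$ a uniformly random ordering of $D$ and $S_i(\pi)$ the players preceding $i$; the Banzhaf value is $\phi_i = 2^{-(n-1)}\sum_{S\subseteq D\setminus\{i\}}(v(S\cup\{i\})-v(S))$ where $n=|D|$. *)

From mathcomp Require Import all_boot all_order all_algebra all_fingroup.
Set Implicit Arguments. Unset Strict Implicit. Unset Printing Implicit Defensive.
Import Order.TTheory GRing.Theory Num.Theory.
Local Open Scope ring_scope.

Section Games.
Variables (R : realFieldType) (T : finType).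

(* An ordering of the player set T is encoded by a permutation pi of T:
   player j is placed at position enum_rank (pi j).  Uniform pi gives a
   uniform ordering.  pred_set pi i = players preceding i. *)
Definition pred_set (pi : {perm T}) (i : T) : {set T} :=
  [set j | (enum_rank (pi j) < enum_rank (pi i))%N].

Definition shapley (v : {set T} -> R) (i : T) : R :=
  (#|{perm T}|%:R)^-1 *
  \sum_(pi : {perm T}) (v (pred_set pi i :|: [set i]) - v (pred_set pi i)).

Definition banzhaf (v : {set T} -> R) (i : T) : R :=
  (2 ^+ (#|T|.-1))^-1 *
  \sum_(S : {set T} | i \notin S) (v (S :|: [set i]) - v S).

Definition cluster (K : nat) (c : T -> 'I_K) (k : 'I_K) : {set T} :=
  [set j | c j == k].

Definition cover_game (K : nat) (c : T -> 'I_K) (u : 'I_K -> R)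
  (S : {set T}) : R :=
  \sum_(k < K) u k * (S :&: cluster c k != set0)%:R.

End Games.

(* Only the cluster of [i] reacts to adding [i]: the marginal contribution of
   [i] to [S] is [u_k] exactly when [S] misses the cluster [C_k] of [i], and 0
   otherwise.  For the Shapley value, [S] is the set of players preceding [i]
   in a random ordering, and [S] misses [C_k] iff [i] comes first in [C_k];
   swapping [i] with another member of [C_k] shows that each of the [n_k]
   members is first equally often, so this happens with probability [1/n_k].
   For the Banzhaf value, the sets [S] avoiding [C_k] are the subsets of the
   complement of [C_k], so there are [2^(n - n_k)] of them among the
   [2^(n-1)] sets not containing [i].  With [u_k = lam1 lam2 n_k] this gives
   [lam1 lam2] and [lam1 lam2 n_k / 2^(n_k - 1)]; the monotonicity of
   [n / 2^(n-1)] is the inequality [n + 1 <= 2 n]. *)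
From mathcomp Require Import all_boot all_order all_algebra all_fingroup.
From mathcomp Require Import ring zify.
Set Implicit Arguments. Unset Strict Implicit. Unset Printing Implicit Defensive.
Import Order.TTheory GRing.Theory Num.Theory.
Local Open Scope ring_scope.

Section FirstInOrdering.
Variable T : finType.
Implicit Types (C : {set T}) (pi : {perm T}).

Definition first_in C (i : T) pi : bool := pred_set pi i :&: C == set0.

Lemma first_in_tperm C i j pi : i \in C -> j \in C ->
  first_in C i (tperm i j * pi)%g = first_in C j pi.
Proof.
move=> iC jC.
have tC x : (tperm i j x \in C) = (x \in C) by case: tpermP => // ->; rewrite iC jC.
rewrite /first_in; apply/idP/idP => /eqP/setP E; apply/eqP/setP => x;
  by have := E (tperm i j x); rewrite !inE !permM ?tpermK tpermL tC.
Qed.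

Lemma sum_first_in C i pi : i \in C -> (\sum_(j in C) first_in C j pi)%N = 1%N.
Proof.
move=> iC; case: (arg_minnP (fun j => val (enum_rank (pi j))) iC) => j0 j0C' j0_min.
have j0C : j0 \in C := j0C'.
have firstE j : j \in C -> first_in C j pi = (j == j0).
  move=> jC; rewrite /first_in; have [-> | ne] := eqVneq j j0.
    apply/eqP/setP => x; rewrite !inE; apply/negbTE/andP => -[lt_x xC].
    by move: (j0_min x xC); rewrite leqNgt lt_x.
  apply/negbTE/set0Pn; exists j0; rewrite !inE j0C andbT ltn_neqAle j0_min //.
  rewrite andbT; apply: contra ne => /eqP eq_rank; apply/eqP.
  by apply: (@perm_inj _ pi); apply: enum_rank_inj; apply: val_inj.
rewrite (eq_bigr (fun j => nat_of_bool (j == j0))) => [|j jC]; last by rewrite firstE.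
by rewrite (bigD1 j0) //= eqxx big1 // => j /andP[_ /negbTE ->].
Qed.

Lemma count_first_in_eq C i j : i \in C -> j \in C ->
  (\sum_pi first_in C i pi)%N = (\sum_pi first_in C j pi)%N.
Proof.
move=> iC jC; rewrite (reindex_inj (mulgI (tperm i j))) /=.
by apply: eq_bigr => pi _; rewrite first_in_tperm.
Qed.

Lemma count_first_in C i : i \in C ->
  (#|C| * \sum_pi first_in C i pi)%N = #|{perm T}|.
Proof.
move=> iC; rewrite -sum_nat_const.
rewrite (eq_bigr (fun j => \sum_pi first_in C j pi)%N) => [|j jC]; last first.
  exact: count_first_in_eq.
rewrite exchange_big /= -sum1_card.
by apply: eq_bigr => pi _; apply: sum_first_in iC.
Qed.

End FirstInOrdering.

Lemma card_notin_disjoint (T : finType) (C : {set T}) (i : T) : i \in C ->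
  #|[set S : {set T} | (i \notin S) && (S :&: C == set0)]| = (2 ^ #|~: C|)%N.
Proof.
move=> iC; rewrite -card_powerset; apply: eq_card => S.
rewrite !inE -disjoints_subset -setI_eq0 andb_idl // => /eqP/setP SC.
by apply/negP => iS; have := SC i; rewrite !inE iS iC.
Qed.

Section HalvingRatio.
Variable R : numFieldType.

Definition halving_ratio (n : nat) : R := n%:R / 2 ^+ (n - 1).

Lemma halving_ratio_succ_le n : (0 < n)%N -> halving_ratio n.+1 <= halving_ratio n.
Proof.
case: n => // n _; rewrite /halving_ratio !subn1 /= exprS invfM mulrA.
rewrite ler_pM2r ?invr_gt0 ?exprn_gt0 // ler_pdivrMr // -natrM ler_nat; lia.
Qed.

Lemma halving_ratio_succ_lt n : (1 < n)%N -> halving_ratio n.+1 < halving_ratio n.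
Proof.
case: n => // n n_gt0; rewrite /halving_ratio !subn1 /= exprS invfM mulrA.
rewrite ltr_pM2r ?invr_gt0 ?exprn_gt0 // ltr_pdivrMr // -natrM ltr_nat; lia.
Qed.

Lemma halving_ratio_le a b : (0 < a)%N -> (a <= b)%N -> halving_ratio b <= halving_ratio a.
Proof.
move=> a_gt0 le_ab.
apply: (@homo_leq_in _ [pred n | 0 < n]%N halving_ratio (fun x y => y <= x)) => //=.
- by move=> y x z xy yz; apply: le_trans yz xy.
- by move=> x y x_gt0 _ z /andP[xz _]; rewrite inE (ltn_trans x_gt0 xz).
- by move=> n; rewrite !inE => n_gt0 _; apply: halving_ratio_succ_le.
- by rewrite inE (leq_trans a_gt0).
Qed.

Lemma halving_ratio_lt a b : (1 < a)%N -> (a < b)%N -> halving_ratio b < halving_ratio a.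
Proof.
move=> a_gt1 lt_ab.
apply: (@homo_ltn_in _ [pred n | 1 < n]%N halving_ratio (fun x y => y < x)) => //=.
- by move=> y x z xy yz; apply: lt_trans yz xy.
- by move=> x y x_gt1 _ z /andP[xz _]; rewrite inE (ltn_trans x_gt1 xz).
- by move=> n; rewrite !inE => n_gt1 _; apply: halving_ratio_succ_lt.
- by rewrite inE (ltn_trans a_gt1).
Qed.

End HalvingRatio.

Section ClusterGame.
Variables (R : realFieldType) (T : finType) (K : nat) (c : T -> 'I_K).
Variables (u : 'I_K -> R) (k : 'I_K) (i : T).
Hypothesis ik : i \in cluster c k.

Lemma cover_game_marginal (S : {set T}) :
  cover_game c u (S :|: [set i]) - cover_game c u S =
  u k * (S :&: cluster c k == set0)%:R.
Proof.
have ci : c i = k by move: ik; rewrite inE => /eqP.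
rewrite /cover_game -sumrB (bigD1 k) //= big1 => [|l lk]; last first.
  rewrite setIUl; suff -> : [set i] :&: cluster c l = set0 by rewrite setU0 subrr.
  apply/setP => x; rewrite !inE; apply/negbTE/andP => -[/eqP -> /eqP il].
  by move: lk; rewrite -il ci eqxx.
have -> : (S :|: [set i]) :&: cluster c k != set0.
  by apply/set0Pn; exists i; rewrite !inE eqxx ci eqxx orbT.
by rewrite addr0 -mulrBr; case: (_ == set0); rewrite /= ?subr0 ?subrr ?mulr0.
Qed.

Lemma cluster_card_gt0 : (0 < #|cluster c k|)%N.
Proof. by apply/card_gt0P; exists i. Qed.

Lemma shapley_cover_game :
  shapley (cover_game c u) i = u k / #|cluster c k|%:R.
Proof.
have count := count_first_in ik.
have nC : (#|cluster c k|%:R : R) != 0 by rewrite pnatr_eq0 -lt0n cluster_card_gt0.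
have nF : ((\sum_pi first_in (cluster c k) i pi)%N%:R : R) != 0.
  have perm_gt0 : (0 < #|{perm T}|)%N by apply/card_gt0P; exists 1%g.
  by move: perm_gt0; rewrite pnatr_eq0 -lt0n -count muln_gt0 => /andP[].
rewrite /shapley; under eq_bigr => pi _ do rewrite cover_game_marginal.
rewrite -mulr_sumr -natr_sum -count natrM.
by field; rewrite nC nF.
Qed.

Lemma banzhaf_cover_game :
  banzhaf (cover_game c u) i = u k / 2 ^+ (#|cluster c k| - 1).
Proof.
rewrite /banzhaf; under eq_bigr => S _ do rewrite cover_game_marginal.
rewrite -mulr_sumr -natr_sum -big_mkcondr /= sum1dep_card card_notin_disjoint //.
rewrite -(cardsC (cluster c k)) -subn1 -addnBAC ?cluster_card_gt0 // exprD natrX.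
by rewrite invfM mulrCA mulfVK // expf_neq0 // pnatr_eq0.
Qed.

End ClusterGame.

Theorem mainTheorem3 (R : realFieldType) (T : finType) (K : nat)
  (c : T -> 'I_K) (m : 'I_K -> R) (lam1 lam2 : R) :
  (forall k : 'I_K, exists j : T, c j = k) ->
  (forall k : 'I_K, 0 < m k) ->
  0 < lam1 -> 0 < lam2 ->
  (forall k : 'I_K, m k = lam2 * #|cluster c k|%:R) ->
  let v := cover_game c (fun k => lam1 * m k) in
  forall (k : 'I_K) (i : T), i \in cluster c k ->
    shapley v i = lam1 * lam2 /\
    banzhaf v i = lam1 * lam2 * (#|cluster c k|%:R / 2 ^+ (#|cluster c k| - 1)) /\
    (forall a b : nat, (1 <= a)%N -> (a <= b)%N ->
       (b%:R / 2 ^+ (b - 1) : R) <= a%:R / 2 ^+ (a - 1)) /\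
    (forall a b : nat, (2 <= a)%N -> (a < b)%N ->
       (b%:R / 2 ^+ (b - 1) : R) < a%:R / 2 ^+ (a - 1)).
Proof.
move=> _ _ _ _ m_card v k i ik.
have n_neq0 : (#|cluster c k|%:R : R) != 0 by rewrite pnatr_eq0 -lt0n (cluster_card_gt0 ik).
split; first by rewrite (shapley_cover_game _ ik) /= m_card mulrA mulfK.
split; first by rewrite (banzhaf_cover_game _ ik) /= m_card !mulrA.
by split; [exact: halving_ratio_le | exact: halving_ratio_lt].
Qed.
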